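(* Let $G$ be a graph and let $S$ be a dual general position set of $G$. Then the central vertex of any induced subgraph of $G$ isomorphic to $K_{1,3}$ does not belong to $S$.
   Context: For $S\subseteq V(G)$, two vertices $u,v$ are $S$-positionable if every shortest $u,v$-path $P$ satisfies $V(P)\cap S\subseteq\{u,v\}$. $S$ is a general position set if every two vertices of $S$ are $S$-positionable, and $S$ is a dual general position set if it is a general position set and every two vertices $u,v\in V(G)\setminus S$ are $S$-positionable. *)

From mathcomp Require Import all_boot.
Set Implicit Arguments. Unset Strict Implicit. Unset Printing Implicit Defensive.

Definition simple_graph (T : finType) (e : rel T) : Prop :=
  symmetric e /\ irreflexive e.

(* A u,v-path (walk) is the vertex sequence u :: p, each consecutive pair
   adjacent, ending at v; its length is size p. *)
Definition uv_path (T : finType) (e : rel T) (u v : T) (p : seq T) : bool :=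
  path e u p && (last u p == v).

(* A shortest u,v-path: a u,v-path of minimum length among all u,v-paths
   (such a walk is automatically a path, i.e. without repeated vertices). *)
Definition shortest_path (T : finType) (e : rel T) (u v : T) (p : seq T) : Prop :=
  uv_path e u v p /\ forall q, uv_path e u v q -> size p <= size q.

Definition S_positionable (T : finType) (e : rel T) (S : {set T}) (u v : T) : Prop :=
  forall p, shortest_path e u v p ->
    forall x, x \in u :: p -> x \in S -> x = u \/ x = v.

Definition general_position_set (T : finType) (e : rel T) (S : {set T}) : Prop :=
  forall u v, u \in S -> v \in S -> u != v -> S_positionable e S u v.

Definition dual_general_position_set (T : finType) (e : rel T) (S : {set T}) : Prop :=
  general_position_set e S /\
  forall u v, u \notin S -> v \notin S -> u != v -> S_positionable e S u v.

Definition induced_claw (T : finType) (e : rel T) (c a1 a2 a3 : T) : Prop :=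
  uniq [:: c; a1; a2; a3] /\
  [/\ e c a1, e c a2 & e c a3] /\
  [/\ ~~ e a1 a2, ~~ e a1 a3 & ~~ e a2 a3].

(* In a claw with center c, two of the three leaves lie on the same side of S
   (both in S or both outside), so a dual general position set makes them
   S-positionable.  Being distinct and non-adjacent with the common neighbour
   c, those two leaves are at distance 2, so the path through c between them
   is a shortest one; hence c cannot be in S. *)
From mathcomp Require Import all_boot.

Set Implicit Arguments. Unset Strict Implicit. Unset Printing Implicit Defensive.

Lemma shortest_path_common_neighbour (T : finType) (e : rel T) (c x y : T) :
  symmetric e -> x != y -> ~~ e x y -> e c x -> e c y ->
  shortest_path e x y [:: c; y].
Proof.
move=> sym xy nexy ecx ecy; split; first by rewrite /uv_path /= sym ecx ecy /=.
case=> [|z [|w q]] //=; first by rewrite /uv_path /= => /eqP xy'; rewrite xy' eqxx in xy.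
by rewrite /uv_path /= andbT => /andP [exz /eqP zy]; rewrite -zy exz in nexy.
Qed.

Lemma positionable_same_side (T : finType) (e : rel T) (S : {set T}) (x y : T) :
  dual_general_position_set e S -> x != y -> (x \in S) = (y \in S) ->
  S_positionable e S x y.
Proof.
move=> [gp dgp] xy; case xS: (x \in S) => yS.
- exact: gp.
- by apply: dgp; rewrite -?yS ?xS.
Qed.

Lemma common_neighbour_notin (T : finType) (e : rel T) (S : {set T}) (c x y : T) :
  symmetric e -> dual_general_position_set e S ->
  c != x -> c != y -> x != y -> e c x -> e c y -> ~~ e x y ->
  (x \in S) = (y \in S) -> c \notin S.
Proof.
move=> sym dgpS cx cy xy ecx ecy nexy same_side; apply/negP => cS.
have pos := positionable_same_side dgpS xy same_side.
have /pos/(_ c) := shortest_path_common_neighbour sym xy nexy ecx ecy.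
rewrite !inE eqxx orbT => /(_ isT cS) [cx' | cy'].
- by rewrite cx' eqxx in cx.
- by rewrite cy' eqxx in cy.
Qed.

Theorem mainTheorem8 (T : finType) (e : rel T) (S : {set T}) :
  simple_graph e -> dual_general_position_set e S ->
  forall c a1 a2 a3 : T, induced_claw e c a1 a2 a3 -> c \notin S.
Proof.
move=> [sym _] dgpS c a1 a2 a3 [uniq_claw [[ca1 ca2 ca3] [n12 n13 n23]]].
move: uniq_claw; rewrite /= !inE !negb_or !andbT.
move=> /andP [/and3P [c1 c2 c3] /andP [/andP [d12 d13] d23]].
have : [|| (a1 \in S) == (a2 \in S), (a1 \in S) == (a3 \in S)
        | (a2 \in S) == (a3 \in S)].
  by case: (a1 \in S); case: (a2 \in S); case: (a3 \in S).
by case/or3P => /eqP same_side; apply: (common_neighbour_notin sym dgpS) same_side.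
Qed.
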